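(* Let $\{\mathcal{H}^A_j\}_{j=0}^J$ be mutually orthogonal subspaces of $\mathcal{H}^A$ with $d_j=\dim\mathcal{H}^A_j$, and let $\pi^A_j$ be the completely mixed state on $\mathcal{H}^A_j$. Let $\{p_j\}_{j=0}^J$ be a probability distribution and $\rho^{BC}_j$ density operators on $\mathcal{H}^{BC}$. Then $\Lambda^{ABC}=\sum_{j=0}^Jp_j\pi^A_j\otimes\rho^{BC}_j$ satisfies $$2^{-H_{\min}(AB|C)_\Lambda}\le\sum_{j=0}^J\frac{p_j}{d_j}2^{-H_{\min}(B|C)_{\rho_j}}.$$
   Context: For positive semidefinite $\rho^{XY}$, $H_{\min}(X|Y)_\rho=\sup_{\sigma^Y}\sup\{\lambda\in\mathbb{R}:2^{-\lambda}I^X\otimes\sigma^Y-\rho^{XY}\ge0\}$, the outer supremum over density operators $\sigma^Y$. Logarithms are base 2. *)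

From HB Require Import structures.
From mathcomp Require Import all_boot all_order all_algebra.
From mathcomp Require Import complex mxtens.
From mathcomp Require Import classical_sets reals constructive_ereal ereal exp.

Set Implicit Arguments.
Unset Strict Implicit.
Unset Printing Implicit Defensive.

Import Order.TTheory GRing.Theory Num.Theory.
Local Open Scope ring_scope.

Definition adjmx (R : rcfType) (m n : nat) (M : 'M[R[i]]_(m, n)) : 'M[R[i]]_(n, m) :=
  (map_mx Num.conj M)^T.

Definition psdmx (R : rcfType) (n : nat) (M : 'M[R[i]]_n) : Prop :=
  adjmx M = M /\ forall v : 'rV[R[i]]_n, 0 <= (v *m M *m adjmx v) 0 0.

Definition density (R : rcfType) (n : nat) (M : 'M[R[i]]_n) : Prop :=
  psdmx M /\ \tr M = 1.

(* conditional min-entropy H_min(X|Y)_rho for rho on H^X (dim m) (x) H^Y (dim n),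
   tensor factor ordering as in mxtens (Kronecker product, X first):
   sup over density operators sigma^Y of sup{ lam | 2^-lam I^X (x) sigma^Y - rho >= 0 } *)
Definition Hmin (R : realType) (m n : nat) (rho : 'M[R[i]]_(m * n)) : \bar R :=
  ereal_sup [set ereal_sup
      [set (lam%:E)%E | lam in
        [set lam : R | psdmx (real_complex R (powR 2 (- lam)) *:
                                 ((1%:M : 'M[R[i]]_m) *t sigma) - rho)]]
    | sigma in [set sigma : 'M[R[i]]_n | density sigma]].

Definition exp2neg (R : realType) (x : \bar R) : \bar R :=
  match x with
  | EFin r => (powR 2 (- r))%:E
  | +oo%E => 0%E
  | -oo%E => +oo%E
  end.

Arguments Hmin {R} m%_N n%_N rho.

From HB Require Import structures.
From mathcomp Require Import all_boot all_order all_algebra.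
From mathcomp Require Import complex mxtens.
From mathcomp Require Import boolp classical_sets reals constructive_ereal ereal exp.

Set Implicit Arguments.
Unset Strict Implicit.
Unset Printing Implicit Defensive.

Import Order.TTheory GRing.Theory Num.Theory.
Local Open Scope ring_scope.

(* Pick, for each j with p_j > 0, a density sigma_j and c_j > 0 close to
   2^{-H_min(B|C)_{rho_j}} with rho_j <= c_j I^B (x) sigma_j.  Since
   pi_j = P_j / d_j for a projection P_j <= I^A, every summand of Lambda satisfies
   p_j pi_j (x) rho_j <= (p_j c_j / d_j) I^A (x) I^B (x) sigma_j, so
   Lambda <= N I^{AB} (x) sigma with N = sum_j p_j c_j / d_j and sigma the normalised
   mixture of the sigma_j.  Hence 2^{-H_min(AB|C)_Lambda} <= N, and letting the c_j
   decrease to their infima gives the bound. *)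

Section Adjoint.
Variable R : rcfType.
Local Notation C := R[i].

Lemma adjmxE m n (M : 'M[C]_(m, n)) i j : adjmx M i j = (M j i)^*.
Proof. by rewrite !mxE. Qed.

Lemma adjmxK m n (M : 'M[C]_(m, n)) : adjmx (adjmx M) = M.
Proof. by apply/matrixP=> i j; rewrite !adjmxE conjCK. Qed.

Lemma adjmx0 m n : adjmx (0 : 'M[C]_(m, n)) = 0.
Proof. by rewrite /adjmx map_mx0 trmx0. Qed.

Lemma adjmx1 n : adjmx (1%:M : 'M[C]_n) = 1%:M.
Proof. by rewrite /adjmx map_mx1 trmx1. Qed.

Lemma adjmxD m n (A B : 'M[C]_(m, n)) : adjmx (A + B) = adjmx A + adjmx B.
Proof. by rewrite /adjmx map_mxD linearD. Qed.

Lemma adjmxB m n (A B : 'M[C]_(m, n)) : adjmx (A - B) = adjmx A - adjmx B.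
Proof. by rewrite /adjmx map_mxB linearB. Qed.

Lemma adjmx_mul m n p (A : 'M[C]_(m, n)) (B : 'M[C]_(n, p)) :
  adjmx (A *m B) = adjmx B *m adjmx A.
Proof. by rewrite /adjmx map_mxM trmx_mul. Qed.

Lemma adjmx_realZ m n (c : R) (A : 'M[C]_(m, n)) :
  adjmx (real_complex R c *: A) = real_complex R c *: adjmx A.
Proof.
by rewrite /adjmx map_mxZ linearZ /= conj_Creal //; apply/complex_realP; exists c.
Qed.

Lemma adjmx_tens m n p q (A : 'M[C]_(m, n)) (B : 'M[C]_(p, q)) :
  adjmx (A *t B) = adjmx A *t adjmx B.
Proof. by rewrite /adjmx map_mxT trmx_tens. Qed.

End Adjoint.

Section Tensor.
Variable R : pzRingType.

Lemma tensmxBl m n p q (A B : 'M[R]_(m, n)) (M : 'M[R]_(p, q)) :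
  (A - B) *t M = A *t M - B *t M.
Proof. by apply/matrixP=> i j; rewrite !mxE mulrBl. Qed.

Lemma tensmxBr m n p q (A : 'M[R]_(m, n)) (M N : 'M[R]_(p, q)) :
  A *t (M - N) = A *t M - A *t N.
Proof. by apply/matrixP=> i j; rewrite !mxE mulrBr. Qed.

Lemma tensmxZl m n p q (c : R) (A : 'M[R]_(m, n)) (M : 'M[R]_(p, q)) :
  (c *: A) *t M = c *: (A *t M).
Proof. by apply/matrixP=> i j; rewrite !mxE mulrA. Qed.

Lemma tensmx_suml (I : finType) m n p q (F : I -> 'M[R]_(m, n)) (M : 'M[R]_(p, q)) :
  (\sum_i F i) *t M = \sum_i F i *t M.
Proof.
apply/matrixP=> a b; rewrite !mxE !summxE mulr_suml.
by apply: eq_bigr => k _; rewrite !mxE.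
Qed.

Lemma tensmx_sumr (I : finType) m n p q (A : 'M[R]_(m, n)) (F : I -> 'M[R]_(p, q)) :
  A *t (\sum_i F i) = \sum_i A *t F i.
Proof.
apply/matrixP=> a b; rewrite !mxE !summxE mulr_sumr.
by apply: eq_bigr => k _; rewrite !mxE.
Qed.

Lemma tens1mx1 m n : (1%:M : 'M[R]_m) *t (1%:M : 'M[R]_n) = 1%:M.
Proof.
apply/matrixP=> i j.
case: (mxtens_indexP i) => i0 i1; case: (mxtens_indexP j) => j0 j1.
rewrite tensmxE !mxE (inj_eq (can_inj (@mxtens_indexK m n))) xpair_eqE.
by case: (i0 == j0); rewrite ?mul1r ?mul0r.
Qed.

Lemma tensmxA m n p (A : 'M[R]_m) (B : 'M[R]_n) (D : 'M[R]_p) :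
  castmx (mulnA m n p, mulnA m n p) (A *t (B *t D)) = (A *t B) *t D.
Proof.
apply/matrixP=> i j.
case: (mxtens_indexP i) => i0 i1; case: (mxtens_indexP j) => j0 j1.
case: (mxtens_indexP i0) => a b; case: (mxtens_indexP j0) => a' b'.
have assoc_index (x : 'I_m) (y : 'I_n) (z : 'I_p) :
    cast_ord (esym (mulnA m n p)) (mxtens_index (mxtens_index (x, y), z))
  = mxtens_index (x, mxtens_index (y, z)).
  by apply: val_inj => /=; rewrite mulnDl -mulnA addnA.
by rewrite castmxE !tensmxE !assoc_index !tensmxE mulrA.
Qed.

End Tensor.

Lemma tensmxZr (R : comPzRingType) m n p q (c : R) (A : 'M[R]_(m, n)) (M : 'M[R]_(p, q)) :
  A *t (c *: M) = c *: (A *t M).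
Proof. by apply/matrixP=> i j; rewrite !mxE mulrCA. Qed.

Lemma castmxB (R : zmodType) m n (e : m = n) (A B : 'M[R]_m) :
  castmx (e, e) (A - B) = castmx (e, e) A - castmx (e, e) B.
Proof. by case: n / e; rewrite !castmx_id. Qed.

Section Psd.
Variable R : rcfType.
Local Notation C := R[i].

Lemma psdmx0 n : psdmx (0 : 'M[C]_n).
Proof. by split=> [|v]; rewrite ?adjmx0 // mulmx0 mul0mx mxE. Qed.

Lemma psdmxD n (A B : 'M[C]_n) : psdmx A -> psdmx B -> psdmx (A + B).
Proof.
move=> [hA qA] [hB qB]; split=> [|v]; first by rewrite adjmxD hA hB.
by rewrite mulmxDr mulmxDl mxE addr_ge0.
Qed.

Lemma psdmxZ n (c : R) (A : 'M[C]_n) :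
  0 <= c -> psdmx A -> psdmx (real_complex R c *: A).
Proof.
move=> c0 [hA qA]; split=> [|v]; first by rewrite adjmx_realZ hA.
by rewrite -scalemxAr -scalemxAl mxE mulr_ge0 ?ler0c.
Qed.

Lemma psdmx_sum (I : finType) (P : pred I) n (F : I -> 'M[C]_n) :
  (forall i, P i -> psdmx (F i)) -> psdmx (\sum_(i | P i) F i).
Proof. exact: (big_ind (@psdmx R n) (psdmx0 n) (@psdmxD n)). Qed.

Lemma psdmx_cast m n (e : m = n) (M : 'M[C]_m) : psdmx M -> psdmx (castmx (e, e) M).
Proof. by case: n / e; rewrite castmx_id. Qed.

Lemma psdmx_congr k n (M : 'M[C]_k) (B : 'M[C]_(k, n)) :
  psdmx M -> psdmx (adjmx B *m M *m B).
Proof.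
move=> [hM qM]; split=> [|v]; first by rewrite !adjmx_mul adjmxK hM mulmxA.
by have := qM (v *m adjmx B); rewrite adjmx_mul adjmxK !mulmxA.
Qed.

Lemma gram_row_sum m n (B : 'M[C]_(m, n)) :
  adjmx B *m B = \sum_i adjmx (row i B) *m row i B.
Proof.
apply/matrixP=> a b; rewrite !mxE summxE; apply: eq_bigr => i _.
by rewrite !mxE big_ord1 !mxE.
Qed.

Lemma psdmx_gram_tens m n p (B : 'M[C]_(m, n)) (M : 'M[C]_p) :
  psdmx M -> psdmx ((adjmx B *m B) *t M).
Proof.
move=> psdM; rewrite gram_row_sum tensmx_suml; apply: psdmx_sum => i _.
have -> : (adjmx (row i B) *m row i B) *t M
    = adjmx (row i B *t 1%:M) *m (1 *t M) *m (row i B *t 1%:M).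
  by rewrite adjmx_tens adjmx1 !tensmx_mul mulmx1 mul1mx mulmx1.
by apply: psdmx_congr; rewrite tens_scalar1mx; apply: psdmx_cast.
Qed.

End Psd.

Section Mixture.
Variable R : rcfType.
Local Notation C := R[i].

Lemma compl_proj_gram k n (U : 'M[C]_(k, n)) : U *m adjmx U = 1%:M ->
  1%:M - adjmx U *m U = adjmx (1%:M - adjmx U *m U) *m (1%:M - adjmx U *m U).
Proof.
move=> UU; have idemP : (adjmx U *m U) *m (adjmx U *m U) = adjmx U *m U.
  by rewrite mulmxA -(mulmxA (adjmx U)) UU mulmx1.
by rewrite adjmxB adjmx1 adjmx_mul adjmxK mulmxBr mulmx1 mulmxBl mul1mx idemP subrr subr0.
Qed.

Lemma psdmx_tens_proj k n p (U : 'M[C]_(k, n)) (X rho : 'M[C]_p) :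
  U *m adjmx U = 1%:M -> psdmx rho -> psdmx (X - rho) ->
  psdmx ((1%:M : 'M[C]_n) *t X - (adjmx U *m U) *t rho).
Proof.
move=> UU psd_rho psd_Xrho.
have psdX : psdmx X by rewrite -(subrK rho X); apply: psdmxD.
have -> : 1%:M *t X - (adjmx U *m U) *t rho
    = (1%:M - adjmx U *m U) *t X + (adjmx U *m U) *t (X - rho).
  by rewrite tensmxBl tensmxBr addrA subrK.
apply: psdmxD; last exact: psdmx_gram_tens.
by rewrite compl_proj_gram //; apply: psdmx_gram_tens.
Qed.

Lemma psdmx_mixture (I : finType) dA dB dC (k : I -> nat)
    (U : forall j, 'M[C]_(k j, dA)) (w c : I -> R)
    (sigma : I -> 'M[C]_dC) (rho : I -> 'M[C]_(dB * dC)) :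
  (forall j, U j *m adjmx (U j) = 1%:M) -> (forall j, 0 <= w j) ->
  (forall j, 0 < w j -> psdmx (rho j) /\
     psdmx (real_complex R (c j) *: (1%:M *t sigma j) - rho j)) ->
  psdmx ((1%:M : 'M[C]_(dA * dB)) *t (\sum_j real_complex R (w j * c j) *: sigma j)
     - castmx (mulnA dA dB dC, mulnA dA dB dC)
         (\sum_j real_complex R (w j) *: ((adjmx (U j) *m U j) *t rho j))).
Proof.
move=> UU w_ge0 dominated.
rewrite -tens1mx1 -tensmxA -castmxB; apply: psdmx_cast.
rewrite !tensmx_sumr -sumrB; apply: psdmx_sum => j _.
have -> : (1%:M : 'M[C]_dA) *t ((1%:M : 'M[C]_dB) *t (real_complex R (w j * c j) *: sigma j))
    - real_complex R (w j) *: ((adjmx (U j) *m U j) *t rho j)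
  = real_complex R (w j) *: (1%:M *t (real_complex R (c j) *: (1%:M *t sigma j))
                             - (adjmx (U j) *m U j) *t rho j).
  by rewrite scalerBr !tensmxZr scalerA -rmorphM.
have [wj0|wj_neq0] := eqVneq (w j) 0; first by rewrite wj0 rmorph0 scale0r; apply: psdmx0.
have [psd_rho psd_dom] : psdmx (rho j) /\
    psdmx (real_complex R (c j) *: (1%:M *t sigma j) - rho j).
  by apply: dominated; rewrite lt_def wj_neq0 w_ge0.
by apply: psdmxZ => //; apply: psdmx_tens_proj.
Qed.

End Mixture.

Lemma le_wsum_approx (R : realType) (I : finType) (w : I -> R) (E : I -> \bar R)
    (L : \bar R) (Q : I -> R -> Prop) :
  (forall i, 0 <= w i) -> (forall i, 0 <= E i)%E ->
  (forall i t, (E i < t%:E)%E -> exists2 c, Q i c & c < t) ->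
  (forall c, (forall i, 0 < w i -> Q i (c i)) -> (L <= (\sum_i w i * c i)%:E)%E) ->
  (L <= \sum_i (w i)%:E * E i)%E.
Proof.
move=> w_ge0 E_ge0 approx bound.
have [[i [wi_gt0 Ei]]|finE] := pselect (exists i, 0 < w i /\ E i = +oo%E).
  apply: le_trans (leey _) _; rewrite (bigD1 i) //= Ei muleC gt0_mulye ?lte_fin //.
  by apply: leeDl; apply: sume_ge0 => j _; apply: mule_ge0; rewrite ?lee_fin.
have Efin i : 0 < w i -> E i = (fine (E i))%:E.
  move=> wi_gt0; rewrite fineK // ge0_fin_numE // ltey.
  by apply/eqP => Ei; apply: finE; exists i.
have -> : (\sum_i (w i)%:E * E i)%E = (\sum_i w i * fine (E i))%:E.
  rewrite -sumEFin; apply: eq_bigr => i _.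
  have [wi0|wi_neq0] := eqVneq (w i) 0; first by rewrite wi0 mul0e mul0r.
  by rewrite {1}(@Efin i) ?EFinM // lt_def wi_neq0 w_ge0.
apply/lee_addgt0Pr => e e_gt0.
set S := \sum_i w i; have S_ge0 : 0 <= S by apply: sumr_ge0.
set delta := e / (S + 1).
have delta_gt0 : 0 < delta by rewrite divr_gt0 // ltr_wpDl.
have pick i : exists ci, ci <= fine (E i) + delta /\ (0 < w i -> Q i ci).
  have [wi_gt0|_] := boolP (0 < w i); last by exists (fine (E i) + delta).
  have [|ci Qci lt_ci] := approx i (fine (E i) + delta).
    by rewrite {1}(Efin i wi_gt0) lte_fin ltrDl.
  by exists ci; split => //; apply: ltW.
have [c cP] := choice pick.
apply: le_trans (bound c (fun i => (cP i).2)) _; rewrite -EFinD lee_fin.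
apply: (@le_trans _ _ (\sum_i w i * (fine (E i) + delta))).
  by apply: ler_sum => i _; rewrite ler_wpM2l // (cP i).1.
rewrite (eq_bigr _ (fun i _ => mulrDr _ _ _)) big_split /= lerD2l -mulr_suml.
rewrite /delta mulrCA ler_piMr ?(ltW e_gt0) //.
by rewrite ler_pdivrMr ?mul1r ?lerDl // ltr_wpDl.
Qed.

Section MinEntropy.
Variable R : realType.
Local Notation C := R[i].

Definition log2 (x : R) := ln x / ln 2.

Lemma ltr_powR2 : {mono powR (2 : R) : x y / x < y}.
Proof.
have ln2_gt0 : 0 < ln (2 : R) by rewrite ln_gt0 // ltr1n.
by move=> x y; rewrite /powR pnatr_eq0 ltr_expR ltr_pM2r.
Qed.

Lemma ler_powR2 : {mono powR (2 : R) : x y / x <= y}.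
Proof. by move=> x y; rewrite !leNgt ltr_powR2. Qed.

Lemma log2K x : 0 < x -> powR 2 (log2 x) = x.
Proof.
move=> x_gt0; rewrite /powR pnatr_eq0 /log2 mulfVK ?lnK //.
by rewrite gt_eqF // ln_gt0 // ltr1n.
Qed.

Lemma exp2neg_ge0 (x : \bar R) : (0 <= exp2neg x)%E.
Proof. by case: x => [r| |] //=; rewrite lee_fin powR_ge0. Qed.

(* [c] plays the role of [2^{-lam}] in the definition of [Hmin]. *)
Definition Hmin_feasible m n (rho : 'M[C]_(m * n)) (c : R) :=
  exists2 sigma : 'M[C]_n, density sigma &
    psdmx (real_complex R c *: ((1%:M : 'M[C]_m) *t sigma) - rho).
Arguments Hmin_feasible m n rho c : clear implicits.

Lemma le_Hmin m n (rho : 'M[C]_(m * n)) lam :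
  Hmin_feasible m n rho (powR 2 (- lam)) -> (lam%:E <= Hmin m n rho)%E.
Proof.
case=> sigma dens dom.
have inner : (lam%:E <= ereal_sup [set x%:E | x in [set x | psdmx
    (real_complex R (powR 2 (- x)) *: ((1%:M : 'M[C]_m) *t sigma) - rho)]])%E.
  by apply: ereal_sup_ubound; exists lam.
by apply: le_trans inner _; apply: ereal_sup_ubound; exists sigma.
Qed.

Lemma exp2neg_Hmin_le m n (rho : 'M[C]_(m * n)) c :
  0 < c -> Hmin_feasible m n rho c -> (exp2neg (Hmin m n rho) <= c%:E)%E.
Proof.
move=> c_gt0 feas; have := @le_Hmin m n rho (- log2 c).
rewrite opprK log2K // => /(_ feas).
case: (Hmin m n rho) => [r| |] //=; last by move=> _; rewrite lee_fin ltW.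
by rewrite !lee_fin -{2}(log2K c_gt0) ler_powR2 lerNl.
Qed.

Lemma exp2neg_Hmin_approx m n (rho : 'M[C]_(m * n)) t :
  (exp2neg (Hmin m n rho) < t%:E)%E ->
  exists2 c, 0 < c /\ Hmin_feasible m n rho c & c < t.
Proof.
move=> lt_t; have t_gt0 : 0 < t by rewrite -lte_fin (le_lt_trans (exp2neg_ge0 _) lt_t).
have : ((- log2 t)%:E < Hmin m n rho)%E.
  move: lt_t; case: (Hmin m n rho) => [r| |] //=; last by move=> _; apply: ltry.
  by rewrite !lte_fin -{1}(log2K t_gt0) ltr_powR2 ltrNl.
rewrite /Hmin => /ereal_sup_gt[_ [sigma dens <-]] /ereal_sup_gt[_ [lam dom <-]].
rewrite lte_fin => lt_lam; exists (powR 2 (- lam)).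
  by split; [apply: powR_gt0 | exists sigma].
by rewrite -(log2K t_gt0) ltr_powR2 ltrNl.
Qed.

Lemma exp2neg_Hmin_mixture_le (I : finType) dA dB dC (k : I -> nat)
    (U : forall j, 'M[C]_(k j, dA)) (w c : I -> R) (rho : I -> 'M[C]_(dB * dC)) :
  (forall j, U j *m adjmx (U j) = 1%:M) -> (forall j, 0 <= w j) ->
  (exists j, 0 < w j) -> (forall j, psdmx (rho j)) ->
  (forall j, 0 < w j -> 0 < c j /\ Hmin_feasible dB dC (rho j) (c j)) ->
  (exp2neg (Hmin (dA * dB) dC (castmx (mulnA dA dB dC, mulnA dA dB dC)
      (\sum_j real_complex R (w j) *: ((adjmx (U j) *m U j) *t rho j))))
    <= (\sum_j w j * c j)%:E)%E.
Proof.
move=> UU w_ge0 [j0 wj0_gt0] psd_rho feasible.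
have [_ [sigma0 dens0 _]] := feasible j0 wj0_gt0.
have witness j : exists s : 'M[C]_dC, density s /\
    (0 < w j -> psdmx (real_complex R (c j) *: (1%:M *t s) - rho j)).
  have [/feasible[_ [s dens dom]]|_] := boolP (0 < w j); first by exists s.
  by exists sigma0.
have [sigma sigmaP] := choice witness.
have wc_ge0 j : 0 <= w j * c j.
  have [/feasible[/ltW c_ge0 _]|] := boolP (0 < w j); first exact: mulr_ge0.
  by rewrite lt_def w_ge0 andbT negbK => /eqP->; rewrite mul0r.
set N := \sum_j w j * c j.
have N_gt0 : 0 < N.
  rewrite /N (bigD1 j0) //= ltr_pwDl ?sumr_ge0 // mulr_gt0 //.
  by have [] := feasible j0 wj0_gt0.
set tau := \sum_j real_complex R (w j * c j) *: sigma j.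
apply: (exp2neg_Hmin_le N_gt0); exists (real_complex R N^-1 *: tau).
  split.
    apply: psdmxZ; first by rewrite invr_ge0 ltW.
    by apply: psdmx_sum => j _; apply: psdmxZ => //; case: (sigmaP j) => -[].
  rewrite /tau mxtraceZ raddf_sum (eq_bigr (fun j => real_complex R (w j * c j))).
    by rewrite -rmorph_sum -rmorphM mulVf ?gt_eqF ?rmorph1.
  by move=> j _; rewrite /= mxtraceZ (sigmaP j).1.2 mulr1.
rewrite tensmxZr scalerA -rmorphM mulfV ?gt_eqF // rmorph1 scale1r.
apply: psdmx_mixture => // j wj_gt0; split=> //.
exact: (sigmaP j).2.
Qed.

End MinEntropy.

Arguments Hmin_feasible {R} m n rho c.

Theorem mainTheorem6 (R : realType) (dA dB dC J : nat)
  (d : 'I_J.+1 -> nat) (U : forall j : 'I_J.+1, 'M[R[i]]_(d j, dA))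
  (p : 'I_J.+1 -> R) (rho : 'I_J.+1 -> 'M[R[i]]_(dB * dC)) :
  (forall j, (0 < d j)%N) ->
  (forall j, U j *m adjmx (U j) = 1%:M) ->
  (forall j k, j != k -> U j *m adjmx (U k) = 0) ->
  (forall j, 0 <= p j) -> \sum_j p j = 1 ->
  (forall j, density (rho j)) ->
  let pi := fun j => real_complex R ((d j)%:R^-1) *: (adjmx (U j) *m U j) in
  let Lambda : 'M[R[i]]_(dA * dB * dC) :=
    castmx (mulnA dA dB dC, mulnA dA dB dC)
      (\sum_j real_complex R (p j) *: (pi j *t rho j)) in
  (exp2neg (Hmin (dA * dB) dC Lambda)
    <= \sum_j ((p j / (d j)%:R)%:E * exp2neg (Hmin dB dC (rho j))))%E.
Proof.
move=> d_gt0 UU _ p_ge0 sum_p dens_rho; cbv zeta.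
have w_ge0 j : 0 <= p j / (d j)%:R by rewrite divr_ge0 ?ler0n.
have [j0 /andP[_ pj0_gt0]] : exists j, true && (0 < p j).
  by apply: psumr_neq0P => [j _|]; rewrite ?sum_p //; apply/eqP; rewrite oner_neq0.
rewrite (eq_bigr (fun j =>
    real_complex R (p j / (d j)%:R) *: ((adjmx (U j) *m U j) *t rho j))); last first.
  by move=> j _; rewrite tensmxZl scalerA -rmorphM.
apply: (le_wsum_approx (Q := fun j c => 0 < c /\ Hmin_feasible dB dC (rho j) c)).
- exact: w_ge0.
- by move=> j; apply: exp2neg_ge0.
- by move=> j t; apply: exp2neg_Hmin_approx.
move=> c feasible; apply: exp2neg_Hmin_mixture_le => // [|j].
  by exists j0; rewrite divr_gt0 ?ltr0n ?d_gt0.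
by case: (dens_rho j).
Qed.
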